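(* Let $G$ be a connected $(2K_2, K_1+C_4)$-free graph. Then either $G$ is a pseudo-split graph, or there exists a partition $(V_1,\dots,V_6)$ of $V(G)$ (parts possibly empty) such that $V_i$ is an independent set for each $i\in\{2,\dots,6\}$, and moreover one of the following holds: (a) $G[V_1]$ is a pseudo-split graph with $\omega(G[V_1])\le \omega(G)-1$, and $V_5=V_6=\emptyset$; or (b) $G[V_1]$ is isomorphic to the complement of a bipartite graph.
   Context: All graphs are finite, simple and undirected. $C_n$, $K_n$ denote the cycle and complete graph on $n$ vertices; $2K_2$ is the disjoint union of two copies of $K_2$; $G_1+G_2$ denotes the join (disjoint union plus all edges between them), so $K_1+C_4$ is the wheel with a center adjacent to all vertices of a $4$-cycle. A graph is $\mathcal F$-free if it has no induced subgraph isomorphic to a member of $\mathcal F$. A pseudo-split graph is a $(2K_2, C_4)$-free graph. $G[S]$ is the subgraph induced by $S$; $\omega$ denotes clique number. *)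

From mathcomp Require Import all_boot.
Set Implicit Arguments. Unset Strict Implicit. Unset Printing Implicit Defensive.

Definition simple_graph (T : finType) (e : rel T) : Prop :=
  symmetric e /\ irreflexive e.

Definition connected_graph (T : finType) (e : rel T) : Prop :=
  forall x y : T, connect e x y.

Definition induced_in (U : finType) (h : rel U) (T : finType) (e : rel T)
  (S : {set T}) : Prop :=
  exists f : U -> T, [/\ injective f, forall u, f u \in S &
                        forall u v, h u v = e (f u) (f v)].

Definition two_K2 : rel 'I_4 := fun i j =>
  [|| (val i == 0) && (val j == 1), (val i == 1) && (val j == 0),
      (val i == 2) && (val j == 3) | (val i == 3) && (val j == 2)].

Definition C4 : rel 'I_4 := fun i j =>
  ((val i + 1) %% 4 == val j) || ((val j + 1) %% 4 == val i).

(* K1 + C4: vertex 0 is the center, vertices 1..4 form the 4-cycle 1-2-3-4-1. *)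
Definition K1_C4 : rel 'I_5 := fun i j =>
  [|| (val i == 0) && (val j != 0), (val j == 0) && (val i != 0) |
      [&& val i != 0, val j != 0 &
          ((((val i).-1 + 1) %% 4 == (val j).-1) ||
           (((val j).-1 + 1) %% 4 == (val i).-1))]].

Definition pseudo_split_in (T : finType) (e : rel T) (S : {set T}) : Prop :=
  ~ induced_in two_K2 e S /\ ~ induced_in C4 e S.

Definition clique (T : finType) (e : rel T) (A : {set T}) : bool :=
  [forall x in A, forall y in A, (x != y) ==> e x y].

Definition independent (T : finType) (e : rel T) (A : {set T}) : bool :=
  [forall x in A, forall y in A, ~~ e x y].

Definition omega_in (T : finType) (e : rel T) (S : {set T}) : nat :=
  \max_(A : {set T} | (A \subset S) && clique e A) #|A|.

(* G[S] is the complement of a bipartite graph: the complement of G[S]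
   admits a proper 2-colouring. *)
Definition co_bipartite_in (T : finType) (e : rel T) (S : {set T}) : Prop :=
  exists c : T -> bool, forall x y, x \in S -> y \in S -> x != y ->
    ~~ e x y -> c x != c y.

From mathcomp Require Import all_boot.
From Stdlib Require Import Classical.
Set Implicit Arguments. Unset Strict Implicit. Unset Printing Implicit Defensive.

(** If G has no induced C4 it is pseudo-split.  Otherwise fix an induced 4-cycle
    v0 v1 v2 v3 and a common neighbour x of v1 and v3, and split the vertices into
    N(x) and the non-neighbours of x, sorted by their adjacency to v1 and v3.
    N(x) inherits 2K2-freeness, is C4-free because x and a C4 inside N(x) would form
    a K1+C4, and every clique of N(x) extends by x, so its clique number drops.
    Non-neighbours of x and v1 (resp. x and v3) are independent, as an edge among
    them forms a 2K2 with x v1 (resp. x v3).  The remaining non-neighbours of x are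
    common neighbours of v1 and v3; if x is adjacent to some common neighbour w,
    an edge y z among them yields either a K1+C4 centred at w on the cycle
    v1 x v3 y, or a 2K2 with x w. *)

Lemma induced_inS (U T : finType) (h : rel U) (e : rel T) (S S' : {set T}) :
  S \subset S' -> induced_in h e S -> induced_in h e S'.
Proof.
by move=> sSS' [f [f_inj fS hf]]; exists f; split=> // u; apply: (subsetP sSS').
Qed.

Lemma induced_in_ord (n : nat) (h : rel 'I_n) (T : finType) (e : rel T)
    (S : {set T}) (f : 'I_n -> T) :
  simple_graph h -> simple_graph e -> injective f -> (forall u, f u \in S) ->
  (forall u v : 'I_n, u < v -> h u v = e (f u) (f v)) -> induced_in h e S.
Proof.
move=> [h_sym h_irr] [e_sym e_irr] f_inj fS hf; exists f; split=> // u v.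
case: (ltngtP u v) => [/hf // | /hf | /val_inj->]; last by rewrite h_irr e_irr.
by rewrite h_sym e_sym.
Qed.

Lemma simple_two_K2 : simple_graph two_K2.
Proof. by split; do ?case=> [[|[|[|[|?]]]] ?]. Qed.

Lemma simple_K1_C4 : simple_graph K1_C4.
Proof. by split; do ?case=> [[|[|[|[|[|?]]]]] ?]. Qed.

Lemma independentS (T : finType) (e : rel T) (A B : {set T}) :
  A \subset B -> independent e B -> independent e A.
Proof.
move=> sAB /forall_inP indB; apply/forall_inP => y /(subsetP sAB) By.
by apply/forall_inP => z /(subsetP sAB) Bz; apply: (forall_inP (indB y By)).
Qed.

Section Graph.
Variables (T : finType) (e : rel T).
Hypotheses (e_sym : symmetric e) (e_irr : irreflexive e).

Lemma edge_neq x y : e x y -> x != y.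
Proof. by apply: contraTneq => ->; rewrite e_irr. Qed.

Lemma edge_nonedge_neq z x y : e z x -> ~~ e z y -> x != y.
Proof. by move=> ezx; apply: contraNneq => <-. Qed.

Lemma induced_two_K2 p q r s :
  e p q -> e r s -> ~~ e p r -> ~~ e p s -> ~~ e q r -> ~~ e q s ->
  induced_in two_K2 e [set: T].
Proof.
move=> epq ers npr nps nqr nqs; have eqp : e q p by rewrite e_sym.
apply: (@induced_in_ord _ _ _ _ _ (tnth [tuple p; q; r; s])) => //.
- exact: simple_two_K2.
- apply/tuple_uniqP; rewrite /= !inE !negb_or !andbT.
  rewrite (edge_neq epq) (edge_neq ers) (edge_nonedge_neq eqp nqr).
  rewrite (edge_nonedge_neq eqp nqs) (edge_nonedge_neq epq npr).
  by rewrite (edge_nonedge_neq epq nps).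
- move=> [[|[|[|[|?]]]] ?] [[|[|[|[|?]]]] ?] //= _; exact/esym/negbTE.
Qed.

Lemma induced_K1_C4 z p1 p2 p3 p4 :
  e z p1 -> e z p2 -> e z p3 -> e z p4 ->
  e p1 p2 -> e p2 p3 -> e p3 p4 -> e p1 p4 ->
  ~~ e p1 p3 -> ~~ e p2 p4 -> p1 != p3 -> p2 != p4 ->
  induced_in K1_C4 e [set: T].
Proof.
move=> ez1 ez2 ez3 ez4 e12 e23 e34 e14 n13 n24 neq13 neq24.
apply: (@induced_in_ord _ _ _ _ _ (tnth [tuple z; p1; p2; p3; p4])) => //.
- exact: simple_K1_C4.
- apply/tuple_uniqP; rewrite /= !inE !negb_or !andbT neq13 neq24.
  rewrite (edge_neq ez1) (edge_neq ez2) (edge_neq ez3) (edge_neq ez4).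
  by rewrite (edge_neq e12) (edge_neq e23) (edge_neq e34) (edge_neq e14).
- move=> [[|[|[|[|[|?]]]]] ?] [[|[|[|[|[|?]]]]] ?] //= _;
  rewrite /K1_C4 /=; exact/esym/negbTE.
Qed.

Lemma induced_C4_neighbours x :
  induced_in C4 e [set y | e x y] -> induced_in K1_C4 e [set: T].
Proof.
move=> [f [f_inj fN fC4]]; pose v i := f (inord i).
have exv i : e x (v i) by have := fN (inord i); rewrite inE.
apply: (induced_K1_C4 (exv 0) (exv 1) (exv 2) (exv 3));
  by rewrite -?fC4 ?(inj_eq f_inj) -?(inj_eq val_inj) /C4 /= ?inordK.
Qed.

Lemma clique_setU1 x A :
  clique e A -> A \subset [set y | e x y] -> clique e (x |: A).
Proof.
move=> /forall_inP cA /subsetP sAN.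
have exA y : y \in A -> e x y by move/sAN; rewrite inE.
apply/forall_inP => y /setU1P[-> | Ay]; apply/forall_inP => z /setU1P[-> | Az].
- by rewrite eqxx.
- by rewrite exA ?implybT.
- by rewrite e_sym exA ?implybT.
- exact: (forall_inP (cA y Ay)).
Qed.

Lemma omega_neighbours_lt x :
  omega_in e [set y | e x y] < omega_in e [set: T].
Proof.
have clique0 : clique e set0 by apply/forall_inP => ?; rewrite inE.
rewrite {1}/omega_in (bigmax_eq_arg set0) ?sub0set //.
case: arg_maxnP => [|A /andP[sAN cA] _]; first by rewrite sub0set.
have xA : x \notin A by apply/negP => /(subsetP sAN); rewrite inE e_irr.
apply: (bigmax_sup (x |: A)); first by rewrite subsetT clique_setU1.
by rewrite cardsU1 xA.
Qed.

Hypotheses (no_two_K2 : ~ induced_in two_K2 e [set: T])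
           (no_K1_C4 : ~ induced_in K1_C4 e [set: T]).

Lemma independent_nonneighbours u v :
  e u v -> independent e [set y | ~~ e u y && ~~ e v y].
Proof.
move=> euv; apply/forall_inP => y; rewrite inE => /andP[nuy nvy].
apply/forall_inP => z; rewrite inE => /andP[nuz nvz]; apply/negP => eyz.
exact: no_two_K2 (induced_two_K2 euv eyz nuy nuz nvy nvz).
Qed.

Lemma independent_common_neighbours x b d w :
  e x b -> e x d -> ~~ e b d -> b != d -> e b w -> e d w -> e x w ->
  independent e [set y | [&& ~~ e x y, e b y & e d y]].
Proof.
move=> exb exd nbd neqbd ebw edw exw.
have nwu u : x != u -> ~~ e x u -> e b u -> e d u -> ~~ e w u.
  move=> neqxu nxu ebu edu; apply/negP => ewu.
  have [ewb ewx ewd ebx] : [/\ e w b, e w x, e w d & e b x].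
    by split; rewrite e_sym.
  exact/no_K1_C4/(induced_K1_C4 ewb ewx ewd ewu ebx exd edu ebu nbd nxu neqbd neqxu).
apply/forall_inP => y; rewrite inE => /and3P[nxy eby edy].
apply/forall_inP => z; rewrite inE => /and3P[nxz ebz edz]; apply/negP => eyz.
have neqxy : x != y by apply: contraNneq nxz => ->.
have neqxz : x != z by apply: contraNneq nxy => ->; rewrite e_sym.
have nwy := nwu y neqxy nxy eby edy; have nwz := nwu z neqxz nxz ebz edz.
exact: no_two_K2 (induced_two_K2 exw eyz nxy nxz nwy nwz).
Qed.

Lemma neighbourhood_partition x b d :
  e x b -> e x d -> independent e [set y | [&& ~~ e x y, e b y & e d y]] ->
  exists V1 V2 V3 V4 V5 V6 : {set T},
    [/\ V1 :|: V2 :|: V3 :|: V4 :|: V5 :|: V6 = [set: T],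
        [&& [disjoint V1 & V2], [disjoint V1 & V3], [disjoint V1 & V4],
            [disjoint V1 & V5], [disjoint V1 & V6],
            [disjoint V2 & V3], [disjoint V2 & V4], [disjoint V2 & V5],
            [disjoint V2 & V6], [disjoint V3 & V4],
            [disjoint V3 & V5], [disjoint V3 & V6], [disjoint V4 & V5],
            [disjoint V4 & V6] & [disjoint V5 & V6]],
        [&& independent e V2, independent e V3, independent e V4,
            independent e V5 & independent e V6] &
        ((pseudo_split_in e V1 /\ omega_in e V1 <= (omega_in e [set: T]).-1
          /\ V5 = set0 /\ V6 = set0)
         \/ co_bipartite_in e V1)].
Proof.
move=> exb exd indV4.
exists [set y | e x y], [set y | ~~ e x y && ~~ e b y],
  [set y | [&& ~~ e x y, e b y & ~~ e d y]], [set y | [&& ~~ e x y, e b y & e d y]],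
  set0, set0.
split.
- by apply/setP => y; rewrite !inE; case: (e x y) (e b y) (e d y) => [] [] [].
- repeat match goal with |- is_true (_ && _) => apply/andP; split end;
    rewrite -setI_eq0; apply/eqP/setP => y; rewrite !inE;
    by case: (e x y) (e b y) (e d y) => [] [] [].
- have ind0 : independent e set0 by apply/forall_inP => ?; rewrite inE.
  rewrite indV4 ind0 independent_nonneighbours //= andbT.
  apply: independentS (independent_nonneighbours exd).
  by apply/subsetP => y; rewrite !inE => /and3P[-> _ ->].
- left; split; [split | split=> //].
  + exact/(contra_not (induced_inS (subsetT _))).
  + exact/(contra_not (@induced_C4_neighbours x)).
  + by rewrite -ltnS (ltn_predK (omega_neighbours_lt x)) omega_neighbours_lt.
Qed.
End Graph.

Theorem theorem3p3 (T : finType) (e : rel T) :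
  simple_graph e -> connected_graph e ->
  ~ induced_in two_K2 e [set: T] -> ~ induced_in K1_C4 e [set: T] ->
  pseudo_split_in e [set: T] \/
  exists V1 V2 V3 V4 V5 V6 : {set T},
    [/\ V1 :|: V2 :|: V3 :|: V4 :|: V5 :|: V6 = [set: T],
        [&& [disjoint V1 & V2], [disjoint V1 & V3], [disjoint V1 & V4],
            [disjoint V1 & V5], [disjoint V1 & V6],
            [disjoint V2 & V3], [disjoint V2 & V4], [disjoint V2 & V5],
            [disjoint V2 & V6], [disjoint V3 & V4],
            [disjoint V3 & V5], [disjoint V3 & V6], [disjoint V4 & V5],
            [disjoint V4 & V6] & [disjoint V5 & V6]],
        [&& independent e V2, independent e V3, independent e V4,
            independent e V5 & independent e V6] &
        ((pseudo_split_in e V1 /\ omega_in e V1 <= (omega_in e [set: T]).-1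
          /\ V5 = set0 /\ V6 = set0)
         \/ co_bipartite_in e V1)].
Proof.
move=> [e_sym e_irr] _ no_two_K2 no_K1_C4.
have [[f [f_inj _ fC4]] | no_C4] := classic (induced_in C4 e [set: T]); last by left.
right; pose v i := f (inord i).
have ev01 : e (v 0) (v 1) by rewrite -fC4 /C4 /= !inordK.
have ev03 : e (v 0) (v 3) by rewrite -fC4 /C4 /= !inordK.
have nv13 : ~~ e (v 1) (v 3) by rewrite -fC4 /C4 /= !inordK.
have neqv13 : v 1 != v 3 by rewrite (inj_eq f_inj) -(inj_eq val_inj) /= !inordK.
set C := [set y | e (v 1) y && e (v 3) y].
(* x = v0 works when C is independent; otherwise x must see an edge of C. *)
have [indC | /forall_inPn[w Cw /forall_inPn[z Cz /negPn ewz]]] := boolP (independent e C).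
- apply: (neighbourhood_partition e_sym e_irr no_two_K2 no_K1_C4 ev01 ev03).
  by apply: independentS indC; apply/subsetP => y; rewrite !inE => /and3P[_ -> ->].
- move: Cw Cz; rewrite !inE => /andP[ev1w ev3w] /andP[ev1z ev3z].
  have [ewv1 ewv3] : e w (v 1) /\ e w (v 3) by split; rewrite e_sym.
  apply: (neighbourhood_partition e_sym e_irr no_two_K2 no_K1_C4 ewv1 ewv3).
  exact: independent_common_neighbours ewv1 ewv3 nv13 neqv13 ev1z ev3z ewz.
Qed.
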